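(* Assume $a_{10}a_{01}\neq0$ and let $\mu=a_{10}/a_{01}$. The level set $\{(I,\theta):\mathcal{L}^*_M(I,\theta)=A_{00}+A_{01}\}$ of the reduced Poincaré function associated to the maximum crest is, on the cylinder $\mathbb{T}\times B$, the union of two ''vertical'' curves, i.e. of two graphs $\{(\theta_{l}(I),I):I\in B\}$ and $\{(\theta_{r}(I),I):I\in B\}$ of smooth functions with $0<\theta_l(I)<\pi<\theta_r(I)<2\pi$, along which $\partial\mathcal{L}^*_M/\partial\theta\neq0$. Here: - if $|\mu|<0.625$ (precisely, $|\mu|<1/\beta_{\max}$), $B=\mathbb{R}$; - if $|\mu|\ge 0.625$, $B=(-\infty,-I_{++})\cup(-I_+,I_+)\cup(I_{++},+\infty)$, where $I_{++}=\max\{I>0:\ I^3\sinh(\pi/2)/\sinh(I\pi/2)=1/|\mu|\}$, and $I_+=\min\{I>0:\ I^3\sinh(\pi/2)/\sinh(I\pi/2)=1/|\mu|\}$ if $|\mu|\le1$, while $I_+=\min\{I>0:\ I^2\sinh(\pi/2)/\sinh(I\pi/2)=1/|\mu|\}$ if $|\mu|\ge1$.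
   Context: $A_{00}=4a_{00}$, $A_{10}(I)=2\pi I a_{10}/\sinh(\pi I/2)$, $A_{01}=2\pi a_{01}/\sinh(\pi/2)$, $\mathcal{L}(I,\varphi,s)=A_{00}+A_{10}(I)\cos\varphi+A_{01}\cos s$. $\alpha(I)=\sinh(\pi/2)I^2/\sinh(\pi I/2)$, $\beta(I)=I\alpha(I)$, $\beta_{\max}=\max_{I\ge 0}\beta(I)\approx1.6$. Maximum crest $C_M(I)$: the component of $\{\mu\alpha(I)\sin\varphi+\sin s=0\}\subset\mathbb{T}^2$ containing $(0,0)$; when $|\mu\alpha(I)|<1$ it is the graph $s=\xi_M(I,\varphi)=-\arcsin(\mu\alpha(I)\sin\varphi)$. For $I$ such that $C_M(I)$ is horizontal and no NHIM line $\{\varphi-Is=\theta\}$ is tangent to it, $\tau^*_M(I,\theta)$ denotes the value with $(\theta-I\tau^*_M,-\tau^*_M)\in C_M(I)$, and the reduced Poincaré function is $\mathcal{L}^*_M(I,\theta)=A_{00}+A_{10}(I)\cos(\theta-I\tau^*_M(I,\theta))+A_{01}\cos(\tau^*_M(I,\theta))$. The two curves of the claim are called highways $H_l$ and $H_r$. *)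

From Stdlib Require Import Reals Lra ClassicalEpsilon.
Open Scope R_scope.

Definition alpha (I : R) : R :=
  if Req_EM_T I 0 then 0 else sinh (PI / 2) * I ^ 2 / sinh (PI * I / 2).

Definition beta (I : R) : R := I * alpha I.

Definition A00 (a00 : R) : R := 4 * a00.
Definition A10 (a10 I : R) : R :=
  if Req_EM_T I 0 then 4 * a10 else 2 * PI * I * a10 / sinh (PI * I / 2).
Definition A01 (a01 : R) : R := 2 * PI * a01 / sinh (PI / 2).

Definition Lpoinc (a00 a10 a01 I phi s : R) : R :=
  A00 a00 + A10 a10 I * cos phi + A01 a01 * cos s.

(* maximum crest as a graph: s = xi_M(I, phi) = - arcsin(mu alpha(I) sin phi) *)
Definition xiM (mu I phi : R) : R := - asin (mu * alpha I * sin phi).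

(* tau*_M(I,theta): the value tau with (theta - I tau, - tau) on the crest
   C_M(I), i.e. - tau = xi_M(I, theta - I tau).  Chosen by (classical)
   description; it is unique whenever |mu beta(I)| < 1. *)
Definition tau_star (mu I theta : R) : R :=
  epsilon (inhabits 0) (fun t => - t = xiM mu I (theta - I * t)).

Definition Lstar (a00 a10 a01 I theta : R) : R :=
  let t := tau_star (a10 / a01) I theta in
  A00 a00 + A10 a10 I * cos (theta - I * t) + A01 a01 * cos t.

Definition is_max_of (P : R -> Prop) (x : R) : Prop :=
  P x /\ forall y, P y -> y <= x.
Definition is_min_of (P : R -> Prop) (x : R) : Prop :=
  P x /\ forall y, P y -> x <= y.

Definition smooth_on (B : R -> Prop) (f : R -> R) : Prop :=
  exists fs : nat -> R -> R,
    fs O = f /\ forall n x, B x -> derivable_pt_lim (fs n) x (fs (S n) x).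

Definition Bdom (mu bmax Ip Ipp I : R) : Prop :=
  if Rlt_dec (Rabs mu) (1 / bmax) then True
  else (I < - Ipp \/ (- Ip < I /\ I < Ip) \/ Ipp < I).

From Coquelicot Require Import Coquelicot.
From Stdlib Require Import Reals Lra FunctionalExtensionality ClassicalEpsilon Ranalysis5 Factorial.
Open Scope R_scope.

(* With [k = mu alpha(I)], the line through [theta] meets the maximum crest at the phase [phi]
   solving [theta = phi + I asin (k sin phi)].  When [|k| < 1] and [|I k| = |mu beta(I)| < 1] this
   is an increasing bijection of [R] fixing [0], [PI] and [2 PI], so [L*_M(I, theta)] is
   [A00 + A01 (r cos phi + sqrt (1 - k^2 sin^2 phi))] with [r = mu alpha(I) / I = A10 / A01].
   It takes the value [A00 + A01] exactly when [cos phi] is the admissible root [c0] of a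
   quadratic, i.e. at [phi = acos c0] and [2 PI - acos c0], whose images are the two highways;
   there the [theta]-derivative is a nonzero multiple of [sin phi].  Everything is smooth in [I]
   because [alpha(I) / I] is, a constant over a power series.  Finally [B] lies where
   [|mu alpha| < 1] and [|mu beta| < 1]: [alpha <= 1] on [[0, 1]], [alpha <= beta] beyond, [beta]
   vanishes at [0] and at infinity, and the extremal roots [I_+], [I_++] are located by the
   intermediate value theorem. *)

Lemma Rabs_le_between x a : Rabs x <= a -> - a <= x <= a.
Proof. unfold Rabs; destruct (Rcase_abs x); lra. Qed.

Lemma Rabs_lt_between x a : Rabs x < a -> - a < x < a.
Proof. unfold Rabs; destruct (Rcase_abs x); lra. Qed.

Lemma div_neq_0 a b : a <> 0 -> b <> 0 -> a / b <> 0.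
Proof.
  intros; apply Rmult_integral_contrapositive_currified; [|apply Rinv_neq_0_compat]; assumption.
Qed.

Lemma inv_le_1 m : 1 <= m -> 1 / m <= 1.
Proof. intros; unfold Rdiv; rewrite Rmult_1_l, <- Rinv_1; apply Rinv_le_contravar; lra. Qed.

Lemma mul_lt_1_of_lt_inv m x : 0 < m -> x < 1 / m -> m * x < 1.
Proof.
  intros Hm Hx; apply Rmult_lt_compat_l with (r := m) in Hx; [|exact Hm].
  replace (m * (1 / m)) with 1 in Hx by (field; lra); exact Hx.
Qed.

Lemma derivable_pt_lim_ext f g x l :
  (forall y, f y = g y) -> derivable_pt_lim f x l -> derivable_pt_lim g x l.
Proof. intros Hfg; now rewrite (functional_extensionality f g Hfg). Qed.

Lemma derivable_pt_lim_eq f x l l' : l = l' -> derivable_pt_lim f x l -> derivable_pt_lim f x l'.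
Proof. now intros ->. Qed.

Lemma IVT_between f a b v :
  continuity f -> a <= b -> f a <= v <= f b \/ f b <= v <= f a ->
  exists z, a <= z <= b /\ f z = v.
Proof.
  intros Hf Hab Hv.
  destruct (IVT_gen f a b v Hf) as [z Hz].
  { unfold Rmin, Rmax; destruct (Rle_dec (f a) (f b)); lra. }
  rewrite Rmin_left, Rmax_right in Hz by exact Hab; eauto.
Qed.

Lemma cos_2PI_sub x : cos (2 * PI - x) = cos x.
Proof.
  replace (2 * PI - x) with (- x + 2 * INR 1 * PI) by (simpl; ring).
  now rewrite cos_period, cos_neg.
Qed.

Lemma sin_2PI_sub x : sin (2 * PI - x) = - sin x.
Proof.
  replace (2 * PI - x) with (- x + 2 * INR 1 * PI) by (simpl; ring).
  now rewrite sin_period, sin_neg.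
Qed.

Lemma cos_eq_iff_on_period phi p :
  0 < phi < PI -> 0 <= p < 2 * PI -> (cos p = cos phi <-> p = phi \/ p = 2 * PI - phi).
Proof.
  intros Hphi Hp; split.
  - intros E; destruct (Rle_or_lt p PI) as [H|H].
    + left; apply cos_inj; lra.
    + right; rewrite <- cos_2PI_sub in E.
      assert (2 * PI - p = phi) by (apply cos_inj; lra); lra.
  - intros [E|E]; rewrite E; [reflexivity|apply cos_2PI_sub].
Qed.

Lemma PI_le_33_10 : PI <= 33 / 10.
Proof.
  destruct (PI_ineq 3) as [_ H]; unfold tg_alt, PI_tg in H; simpl in H.
  unfold INR in H; simpl in H; lra.
Qed.

Lemma pow_div_fact_le_exp x n : 0 <= x -> x ^ n / INR (fact n) <= exp x.
Proof.
  intros Hx; eapply Rle_trans; [|exact (exp_ge_taylor x n Hx)].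
  destruct n as [|n]; [simpl; lra|].
  rewrite tech5.
  assert (0 <= sum_f_R0 (fun k => x ^ k / INR (fact k)) n); [|lra].
  apply cond_pos_sum; intros k.
  apply Rmult_le_pos; [now apply pow_le|left; apply Rinv_0_lt_compat, INR_fact_lt_0].
Qed.

Lemma exp_ge_taylor4 x : 0 <= x -> 1 + x + x ^ 2 / 2 + x ^ 3 / 6 + x ^ 4 / 24 <= exp x.
Proof.
  intros Hx; eapply Rle_trans; [|exact (exp_ge_taylor x 4 Hx)].
  simpl; lra.
Qed.

Lemma sinh_pos x : 0 < x -> 0 < sinh x.
Proof. intros; rewrite <- sinh_0; now apply sinh_lt. Qed.

Lemma cosh_pos y : 0 < cosh y.
Proof. unfold cosh; assert (H1 := exp_pos y); assert (H2 := exp_pos (- y)); lra. Qed.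

Lemma is_max_of_iff (P Q : R -> Prop) x : (forall y, P y <-> Q y) -> is_max_of P x -> is_max_of Q x.
Proof. intros HPQ [HPx Hmax]; split; [now apply HPQ|intros y Hy; now apply Hmax, HPQ]. Qed.

Lemma is_min_of_iff (P Q : R -> Prop) x : (forall y, P y <-> Q y) -> is_min_of P x -> is_min_of Q x.
Proof. intros HPQ [HPx Hmin]; split; [now apply HPQ|intros y Hy; now apply Hmin, HPQ]. Qed.

Lemma nonneg_of_concave f f' f'' a b :
  a < b ->
  (forall x, a <= x <= b -> derivable_pt_lim f x (f' x)) ->
  (forall x, a <= x <= b -> derivable_pt_lim f' x (f'' x)) ->
  (forall x, a <= x <= b -> f'' x <= 0) -> 0 <= f a -> 0 <= f b ->
  forall y, a <= y <= b -> 0 <= f y.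
Proof.
  intros Hab Df Df' Hconc Ha Hb y Hy.
  destruct (Rle_or_lt 0 (f y)) as [|Hfy]; [assumption|exfalso].
  assert (Hay : a < y) by (destruct (Req_dec a y); subst; lra).
  assert (Hyb : y < b) by (destruct (Req_dec y b); subst; lra).
  destruct (MVT_cor2 f f' a y Hay (fun x Hx => Df x ltac:(lra))) as [p [Ep Hp]].
  destruct (MVT_cor2 f f' y b Hyb (fun x Hx => Df x ltac:(lra))) as [q [Eq Hq]].
  destruct (MVT_cor2 f' f'' p q ltac:(lra) (fun x Hx => Df' x ltac:(lra))) as [r [Er Hr]].
  assert (f'' r <= 0) by (apply Hconc; lra).
  assert (f' p < 0) by (assert (f' p * (y - a) < 0) by lra; nra).
  assert (0 < f' q) by (assert (0 < f' q * (b - y)) by lra; nra).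
  nra.
Qed.

(** * Smooth functions *)

(* Expressions over atoms whose derivatives are again expressions: smoothness of sums, products
   and compositions then follows by formal differentiation, with no Leibniz formula. *)
Inductive fexpr (A : Type) : Type :=
| FConst : R -> fexpr A
| FAtom : A -> fexpr A
| FAdd : fexpr A -> fexpr A -> fexpr A
| FMul : fexpr A -> fexpr A -> fexpr A.
Arguments FConst {A}. Arguments FAtom {A}. Arguments FAdd {A}. Arguments FMul {A}.

Section FormalDerivative.
Variables (A : Type) (atom_fun : A -> R -> R) (atom_deriv : A -> fexpr A).

Fixpoint feval (t : fexpr A) : R -> R :=
  match t with
  | FConst r => fun _ => r
  | FAtom a => atom_fun a
  | FAdd t1 t2 => fun x => feval t1 x + feval t2 x
  | FMul t1 t2 => fun x => feval t1 x * feval t2 x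
  end.

Fixpoint fderiv (t : fexpr A) : fexpr A :=
  match t with
  | FConst _ => FConst 0
  | FAtom a => atom_deriv a
  | FAdd t1 t2 => FAdd (fderiv t1) (fderiv t2)
  | FMul t1 t2 => FAdd (FMul (fderiv t1) t2) (FMul t1 (fderiv t2))
  end.

Variable U : R -> Prop.
Hypothesis atom_derivable :
  forall a x, U x -> derivable_pt_lim (atom_fun a) x (feval (atom_deriv a) x).

Lemma feval_derivable t x : U x -> derivable_pt_lim (feval t) x (feval (fderiv t) x).
Proof.
  intros Ux; induction t; simpl.
  - apply derivable_pt_lim_const.
  - now apply atom_derivable.
  - now apply (derivable_pt_lim_plus (feval t1) (feval t2)).
  - now apply (derivable_pt_lim_mult (feval t1) (feval t2)).
Qed.

Lemma smooth_on_feval t : smooth_on U (feval t).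
Proof.
  exists (fun n => feval (Nat.iter n fderiv t)); split; [reflexivity|].
  intros n x Ux; apply feval_derivable, Ux.
Qed.

End FormalDerivative.

Lemma smooth_on_ext U f g : (forall x, f x = g x) -> smooth_on U f -> smooth_on U g.
Proof. intros Hfg; now rewrite (functional_extensionality f g Hfg). Qed.

Lemma smooth_on_subset (U V : R -> Prop) f :
  (forall x, U x -> V x) -> smooth_on V f -> smooth_on U f.
Proof. intros HUV [fs [Hf0 Hfs]]; exists fs; split; auto. Qed.

Lemma smooth_on_const U c : smooth_on U (fun _ => c).
Proof.
  exists (fun n => match n with O => fun _ => c | S _ => fun _ => 0 end); split; [reflexivity|].
  intros [|n] x _; apply derivable_pt_lim_const.
Qed.

Lemma smooth_on_id U : smooth_on U (fun x => x).
Proof.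
  exists (fun n => match n with O => fun x => x | 1%nat => fun _ => 1 | _ => fun _ => 0 end).
  split; [reflexivity|].
  intros [|[|n]] x _; [apply derivable_pt_lim_id | apply derivable_pt_lim_const..].
Qed.

Lemma smooth_on_of_derive U f f' :
  (forall x, U x -> derivable_pt_lim f x (f' x)) -> smooth_on U f' -> smooth_on U f.
Proof.
  intros Hf [fs [Hf0 Hfs]].
  exists (fun n => match n with O => f | S m => fs m end); split; [reflexivity|].
  intros [|n] x Ux; simpl; [rewrite Hf0|]; auto.
Qed.

Lemma smooth_on_pair_feval U (fs gs : nat -> R -> R) :
  (forall n x, U x -> derivable_pt_lim (fs n) x (fs (S n) x)) ->
  (forall n x, U x -> derivable_pt_lim (gs n) x (gs (S n) x)) ->
  forall t, smooth_on U (feval _ (fun p : bool * nat => if fst p then fs (snd p) else gs (snd p)) t).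
Proof.
  intros Hfs Hgs; apply (smooth_on_feval _ _ (fun p => FAtom (fst p, S (snd p)))).
  intros [[|] n] x Ux; simpl; auto.
Qed.

Lemma smooth_on_plus U f g :
  smooth_on U f -> smooth_on U g -> smooth_on U (fun x => f x + g x).
Proof.
  intros [fs [<- Hfs]] [gs [<- Hgs]].
  exact (smooth_on_pair_feval U fs gs Hfs Hgs (FAdd (FAtom (true, O)) (FAtom (false, O)))).
Qed.

Lemma smooth_on_mult U f g :
  smooth_on U f -> smooth_on U g -> smooth_on U (fun x => f x * g x).
Proof.
  intros [fs [<- Hfs]] [gs [<- Hgs]].
  exact (smooth_on_pair_feval U fs gs Hfs Hgs (FMul (FAtom (true, O)) (FAtom (false, O)))).
Qed.

Lemma smooth_on_scal U c f : smooth_on U f -> smooth_on U (fun x => c * f x).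
Proof. apply smooth_on_mult, smooth_on_const. Qed.

Lemma smooth_on_minus U f g :
  smooth_on U f -> smooth_on U g -> smooth_on U (fun x => f x - g x).
Proof.
  intros Hf Hg; apply smooth_on_ext with (fun x => f x + -1 * g x); [intros; ring|].
  now apply smooth_on_plus, smooth_on_scal.
Qed.

Lemma smooth_on_comp (U V : R -> Prop) f g :
  smooth_on V f -> smooth_on U g -> (forall x, U x -> V (g x)) ->
  smooth_on U (fun x => f (g x)).
Proof.
  intros [fs [<- Hfs]] [gs [<- Hgs]] HUV.
  pose (atom_fun := fun p : nat + nat =>
          match p with inl i => fun x => fs i (gs O x) | inr j => gs j end).
  pose (atom_deriv := fun p : nat + nat =>
          match p with inl i => FMul (FAtom (inl (S i))) (FAtom (inr 1%nat))
                     | inr j => FAtom (inr (S j)) end).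
  apply (smooth_on_feval _ atom_fun atom_deriv U) with (t := FAtom (inl O)).
  intros [i|j] x Ux; simpl; auto.
  apply (derivable_pt_lim_comp (gs O) (fs i)); auto.
Qed.

Lemma smooth_on_sin U : smooth_on U sin.
Proof.
  apply (smooth_on_feval bool (fun b => if b then sin else cos)
           (fun b => if b then FAtom false else FMul (FConst (-1)) (FAtom true)))
    with (t := FAtom true).
  intros [|] x _; simpl.
  - apply derivable_pt_lim_sin.
  - eapply derivable_pt_lim_eq; [|apply derivable_pt_lim_cos]; ring.
Qed.

Lemma derivable_pt_lim_Rinv x : x <> 0 -> derivable_pt_lim Rinv x (- / x * / x).
Proof.
  intros Hx; apply derivable_pt_lim_ext with (fct_cte 1 / id)%F.
  { intros y; unfold div_fct, fct_cte, id, Rdiv; ring. }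
  eapply derivable_pt_lim_eq;
    [|apply derivable_pt_lim_div; [apply derivable_pt_lim_const|apply derivable_pt_lim_id|exact Hx]].
  unfold fct_cte, id, Rsqr; field; exact Hx.
Qed.

Lemma smooth_on_Rinv_base : smooth_on (fun x => x <> 0) Rinv.
Proof.
  apply (smooth_on_feval unit (fun _ => Rinv)
           (fun _ => FMul (FConst (-1)) (FMul (FAtom tt) (FAtom tt))))
    with (t := FAtom tt).
  intros _ x Hx; simpl; eapply derivable_pt_lim_eq; [|now apply derivable_pt_lim_Rinv]; ring.
Qed.

Lemma smooth_on_inv U f :
  smooth_on U f -> (forall x, U x -> f x <> 0) -> smooth_on U (fun x => / f x).
Proof. intros Hf Hnz; apply (smooth_on_comp U (fun x => x <> 0)); auto using smooth_on_Rinv_base. Qed.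

Lemma derivable_pt_lim_inv_sqrt x :
  0 < x -> derivable_pt_lim (fun y => / sqrt y) x (- / 2 * (/ sqrt x * (/ sqrt x * / sqrt x))).
Proof.
  intros Hx; assert (Hs : 0 < sqrt x) by now apply sqrt_lt_R0.
  assert (D := derivable_pt_lim_comp sqrt Rinv x _ _
                 (derivable_pt_lim_sqrt x Hx) (derivable_pt_lim_Rinv (sqrt x) ltac:(lra))).
  eapply derivable_pt_lim_eq; [|exact D].
  assert (E : sqrt x * sqrt x = x) by (apply sqrt_sqrt; lra).
  field_simplify; lra.
Qed.

(* [sqrt] and [/ sqrt] differentiate into each other, up to polynomial factors. *)
Lemma smooth_on_sqrt_base : smooth_on (fun x => 0 < x) sqrt.
Proof.
  apply (smooth_on_feval bool (fun b => if b then sqrt else fun y => / sqrt y)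
     (fun b => if b then FMul (FConst (/ 2)) (FAtom false)
               else FMul (FConst (- / 2)) (FMul (FAtom false) (FMul (FAtom false) (FAtom false)))))
    with (t := FAtom true).
  intros [|] x Hx; simpl.
  - eapply derivable_pt_lim_eq; [|now apply derivable_pt_lim_sqrt].
    assert (0 < sqrt x) by now apply sqrt_lt_R0. field; lra.
  - now apply derivable_pt_lim_inv_sqrt.
Qed.

Lemma smooth_on_sqrt U f :
  smooth_on U f -> (forall x, U x -> 0 < f x) -> smooth_on U (fun x => sqrt (f x)).
Proof. intros Hf Hpos; apply (smooth_on_comp U (fun x => 0 < x)); auto using smooth_on_sqrt_base. Qed.

Lemma derivable_pt_lim_asin x : -1 < x < 1 -> derivable_pt_lim asin x (/ sqrt (1 - x * x)).
Proof.
  intros Hx; apply (derive_pt_eq_1 _ _ _ (derivable_pt_asin x Hx)).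
  rewrite derive_pt_asin; unfold Rsqr; field.
  apply Rgt_not_eq, sqrt_lt_R0; nra.
Qed.

Lemma smooth_on_asin_base : smooth_on (fun x => -1 < x < 1) asin.
Proof.
  apply smooth_on_of_derive with (fun x => / sqrt (1 - x * x)).
  { intros; now apply derivable_pt_lim_asin. }
  apply smooth_on_inv.
  - apply smooth_on_sqrt; [|intros; nra].
    apply smooth_on_minus; [apply smooth_on_const|apply smooth_on_mult; apply smooth_on_id].
  - intros x Hx; apply Rgt_not_eq, sqrt_lt_R0; nra.
Qed.

Lemma smooth_on_asin U f :
  smooth_on U f -> (forall x, U x -> -1 < f x < 1) -> smooth_on U (fun x => asin (f x)).
Proof.
  intros Hf Hb; apply (smooth_on_comp U (fun x => -1 < x < 1)); auto using smooth_on_asin_base.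
Qed.

(** * The functions alpha and beta *)

Definition sinhc_coef (n : nat) : R := (1 + (-1) ^ n) / 2 / INR (fact (S n)).

(* [sinh x / x], as a power series so that it is visibly smooth at [0]. *)
Definition sinhc (x : R) : R := PSeries sinhc_coef x.

Lemma Rabs_sinhc_coef_le n : Rabs (sinhc_coef n) <= / INR (fact n).
Proof.
  unfold sinhc_coef.
  assert (H1 : 0 < INR (fact n)) by apply INR_fact_lt_0.
  assert (H2 : INR (fact n) <= INR (fact (S n))) by (apply le_INR, fact_le; auto).
  assert (Hinv : 0 < / INR (fact (S n)) <= / INR (fact n)).
  { split; [apply Rinv_0_lt_compat|apply Rinv_le_contravar]; lra. }
  assert (Hsign : -1 <= (-1) ^ n <= 1) by (apply Rabs_le_between; rewrite pow_1_abs; lra).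
  rewrite Rabs_pos_eq; unfold Rdiv; nra.
Qed.

Lemma CV_radius_sinhc_coef x : Rbar_lt (Rabs x) (CV_radius sinhc_coef).
Proof.
  destruct (CV_radius_bounded sinhc_coef) as [Hub _].
  assert (H : Rbar_le (Rabs x + 1) (CV_radius sinhc_coef)).
  { apply Hub; exists (exp (Rabs x + 1)); intros n.
    assert (0 <= Rabs x) by apply Rabs_pos.
    rewrite Rabs_mult, <- RPow_abs, (Rabs_right (Rabs x + 1)) by lra.
    apply Rle_trans with (/ INR (fact n) * (Rabs x + 1) ^ n).
    - apply Rmult_le_compat_r; [apply pow_le; lra|apply Rabs_sinhc_coef_le].
    - rewrite Rmult_comm; apply pow_div_fact_le_exp; lra. }
  destruct (CV_radius sinhc_coef); simpl in *; lra.
Qed.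

Lemma smooth_on_sinhc U : smooth_on U sinhc.
Proof.
  exists (fun k => PSeries (Nat.iter k PS_derive sinhc_coef)); split; [reflexivity|].
  intros n x _; apply is_derive_Reals, is_derive_PSeries.
  induction n as [|n IH]; simpl; [apply CV_radius_sinhc_coef|now rewrite CV_radius_derive].
Qed.

Lemma sinhc_0 : sinhc 0 = 1.
Proof. unfold sinhc; rewrite PSeries_0; unfold sinhc_coef; simpl; field. Qed.

Lemma sinh_eq_mul_sinhc x : sinh x = x * sinhc x.
Proof.
  symmetry; unfold sinhc; rewrite <- PSeries_incr_1; apply is_pseries_unique.
  assert (Hexp := is_exp_Reals x).
  assert (Hexp_opp : is_pseries (fun n => (-1) ^ n / INR (fact n)) x (exp (- x))).
  { apply is_series_ext with (a := fun k => scal (pow_n (- x) k) (/ INR (fact k)));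
      [|apply is_exp_Reals].
    intros n; unfold scal; simpl; unfold mult; simpl; rewrite !pow_n_pow.
    change (pow_n x n) with (x ^ n).
    replace (- x) with (-1 * x) by ring; rewrite Rpow_mult_distr; unfold Rdiv; ring. }
  assert (Hsinh := is_pseries_scal (/ 2) _ _ _ (Rmult_comm _ _)
                     (is_pseries_minus _ _ _ _ _ Hexp Hexp_opp)).
  replace (sinh x) with (scal (/ 2) (plus (exp x) (opp (exp (- x))))).
  2: { unfold sinh, scal, plus, opp; simpl; unfold mult; simpl; unfold plus, opp; simpl; field. }
  apply is_pseries_ext with (2 := Hsinh).
  intros [|n]; unfold PS_scal, PS_minus, PS_incr_1, PS_plus, PS_opp, sinhc_coef; simpl;
    unfold scal, plus, opp, zero; simpl; unfold mult, plus, opp, zero; simpl.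
  - field.
  - assert (0 < INR (fact n + n * fact n)) by exact (INR_fact_lt_0 (S n)).
    field; lra.
Qed.

Lemma sinhc_pos x : 0 < sinhc x.
Proof.
  destruct (Rtotal_order x 0) as [Hx|[->|Hx]]; [|rewrite sinhc_0; lra|].
  - assert (Hs : sinh x < 0) by (rewrite <- sinh_0; now apply sinh_lt).
    rewrite sinh_eq_mul_sinhc in Hs; nra.
  - assert (Hs := sinh_pos x Hx); rewrite sinh_eq_mul_sinhc in Hs; nra.
Qed.

Lemma sinhc_opp x : sinhc (- x) = sinhc x.
Proof.
  destruct (Req_dec x 0) as [->|Hx]; [now rewrite Ropp_0|].
  apply Rmult_eq_reg_l with (- x); [|lra].
  replace (- x * sinhc x) with (- (x * sinhc x)) by ring.
  rewrite <- !sinh_eq_mul_sinhc; unfold sinh; rewrite Ropp_involutive; field.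
Qed.

(* [alpha I / I], extended smoothly through [I = 0]. *)
Definition alpha_quot (I : R) : R := 2 * sinh (PI / 2) / PI / sinhc (PI * I / 2).

Lemma sinh_PI2_pos : 0 < sinh (PI / 2).
Proof. apply sinh_pos, PI2_RGT_0. Qed.

Lemma alpha_quot_pos I : 0 < alpha_quot I.
Proof.
  assert (Hs := sinh_PI2_pos); assert (Hu := sinhc_pos (PI * I / 2)); assert (HP := PI_RGT_0).
  unfold alpha_quot; repeat apply Rdiv_lt_0_compat; lra.
Qed.

Lemma sinh_PI_mul_neq0 I : I <> 0 -> sinh (PI * I / 2) <> 0.
Proof.
  intros HI; rewrite sinh_eq_mul_sinhc.
  assert (Hu := sinhc_pos (PI * I / 2)); assert (HP := PI_RGT_0).
  apply Rmult_integral_contrapositive; split; [intro; apply HI; nra|lra].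
Qed.

Lemma alpha_quot_neq0 I : I <> 0 -> alpha_quot I = sinh (PI / 2) * I / sinh (PI * I / 2).
Proof.
  intros HI; unfold alpha_quot; rewrite (sinh_eq_mul_sinhc (PI * I / 2)).
  assert (Hu := sinhc_pos (PI * I / 2)); assert (HP := PI_RGT_0).
  field; repeat split; lra.
Qed.

Lemma alpha_eq_mul_quot I : alpha I = I * alpha_quot I.
Proof.
  unfold alpha; destruct (Req_EM_T I 0) as [->|HI]; [ring|].
  rewrite alpha_quot_neq0 by exact HI.
  field; now apply sinh_PI_mul_neq0.
Qed.

Lemma A10_eq_mul_quot a10 a01 I :
  a01 <> 0 -> A10 a10 I = a10 / a01 * alpha_quot I * A01 a01.
Proof.
  intros Ha01; unfold A10, A01.
  assert (Hs := sinh_PI2_pos); assert (HP := PI_RGT_0).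
  destruct (Req_EM_T I 0) as [->|HI].
  - unfold alpha_quot; replace (PI * 0 / 2) with 0 by field; rewrite sinhc_0; field; lra.
  - rewrite alpha_quot_neq0 by exact HI.
    assert (sinh (PI * I / 2) <> 0) by now apply sinh_PI_mul_neq0.
    field; lra.
Qed.

Lemma smooth_on_alpha_quot U : smooth_on U alpha_quot.
Proof.
  apply smooth_on_scal, smooth_on_inv; [|intros; apply Rgt_not_eq, sinhc_pos].
  apply (smooth_on_comp U (fun _ => True)); auto using smooth_on_sinhc.
  apply smooth_on_ext with (fun x => PI / 2 * x); [intros; field|].
  apply smooth_on_scal, smooth_on_id.
Qed.

Lemma continuity_alpha_quot : continuity alpha_quot.
Proof.
  intros I; destruct (smooth_on_alpha_quot (fun _ => True)) as [fs [<- Hfs]].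
  apply derivable_continuous_pt; exists (fs 1%nat I); now apply Hfs.
Qed.

Lemma continuity_alpha : continuity alpha.
Proof.
  replace alpha with (fun I => I * alpha_quot I)
    by (apply functional_extensionality; intros; now rewrite alpha_eq_mul_quot).
  apply continuity_mult; [apply derivable_continuous, derivable_id|apply continuity_alpha_quot].
Qed.

Lemma alpha_opp I : alpha (- I) = - alpha I.
Proof.
  rewrite !alpha_eq_mul_quot; unfold alpha_quot.
  replace (PI * - I / 2) with (- (PI * I / 2)) by field.
  rewrite sinhc_opp; ring.
Qed.

Lemma beta_opp I : beta (- I) = beta I.
Proof. unfold beta; rewrite alpha_opp; ring. Qed.

Lemma alpha_1 : alpha 1 = 1.
Proof.
  unfold alpha; destruct (Req_EM_T 1 0); [lra|].
  replace (PI * 1 / 2) with (PI / 2) by field.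
  assert (H := sinh_PI2_pos); field; lra.
Qed.

Lemma beta_1 : beta 1 = 1.
Proof. unfold beta; rewrite alpha_1; ring. Qed.

Lemma beta_0 : beta 0 = 0.
Proof. unfold beta; ring. Qed.

Lemma alpha_0 : alpha 0 = 0.
Proof. rewrite alpha_eq_mul_quot; ring. Qed.

Lemma alpha_nonneg I : 0 <= I -> 0 <= alpha I.
Proof. intros HI; rewrite alpha_eq_mul_quot; assert (H := alpha_quot_pos I); nra. Qed.

Lemma beta_nonneg I : 0 <= I -> 0 <= beta I.
Proof. intros HI; unfold beta; assert (H := alpha_nonneg I HI); nra. Qed.

Lemma Rabs_alpha I : Rabs (alpha I) = alpha (Rabs I).
Proof.
  unfold Rabs at 2; destruct (Rcase_abs I) as [H|H].
  - rewrite <- (Ropp_involutive I) at 1; rewrite alpha_opp, Rabs_Ropp.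
    apply Rabs_right, Rle_ge, alpha_nonneg; lra.
  - apply Rabs_right, Rle_ge, alpha_nonneg; lra.
Qed.

Lemma Rabs_beta I : Rabs (beta I) = beta (Rabs I).
Proof.
  unfold Rabs at 2; destruct (Rcase_abs I) as [H|H].
  - rewrite <- beta_opp; apply Rabs_right, Rle_ge, beta_nonneg; lra.
  - apply Rabs_right, Rle_ge, beta_nonneg; lra.
Qed.

Lemma continuity_beta : continuity beta.
Proof. apply continuity_mult; [apply derivable_continuous, derivable_id|apply continuity_alpha]. Qed.

Lemma sinh_ratio3_eq_beta I : 0 < I -> I ^ 3 * sinh (PI / 2) / sinh (I * PI / 2) = beta I.
Proof.
  intros HI; unfold beta, alpha; destruct (Req_EM_T I 0); [lra|].
  replace (I * PI / 2) with (PI * I / 2) by field.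
  field; now apply sinh_PI_mul_neq0.
Qed.

Lemma sinh_ratio2_eq_alpha I : 0 < I -> I ^ 2 * sinh (PI / 2) / sinh (I * PI / 2) = alpha I.
Proof.
  intros HI; unfold alpha; destruct (Req_EM_T I 0); [lra|].
  replace (I * PI / 2) with (PI * I / 2) by field.
  field; now apply sinh_PI_mul_neq0.
Qed.

Lemma mul_cosh_lt_two_sinh_PI2 : PI / 2 * cosh (PI / 2) < 2 * sinh (PI / 2).
Proof.
  set (c := PI / 2).
  assert (Hc : 3 / 2 < c <= 33 / 20)
    by (unfold c; assert (H1 := PI2_3_2); assert (H2 := PI_le_33_10); lra).
  assert (Hexp := exp_ge_taylor4 c ltac:(lra)).
  assert (Hinv : exp c * exp (- c) = 1) by (rewrite <- exp_plus, Rplus_opp_r; apply exp_0).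
  unfold sinh, cosh; set (X := exp c) in *; set (Y := exp (- c)) in *.
  assert (0 < Y) by apply exp_pos.
  assert (HX : 4 <= X) by nra.
  apply Rmult_lt_reg_l with (2 * X); [lra|].
  replace (2 * X * (c * ((X + Y) / 2))) with (c * (X * X + X * Y)) by field.
  replace (2 * X * (2 * ((X - Y) / 2))) with (2 * (X * X) - 2 * (X * Y)) by field.
  rewrite Hinv; nra.
Qed.

(* Equivalently [tanh y >= y / 2] on [[0, PI/2]]: [2 sinh y - y cosh y] is concave there. *)
Lemma mul_cosh_le_two_sinh y : 0 <= y <= PI / 2 -> y * cosh y <= 2 * sinh y.
Proof.
  intros Hy; cut (0 <= 2 * sinh y - y * cosh y); [lra|].
  apply (nonneg_of_concave (fun y => 2 * sinh y - y * cosh y)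
           (fun y => cosh y - y * sinh y) (fun y => - (y * cosh y)) 0 (PI / 2));
    [apply PI2_RGT_0| | | | | |exact Hy].
  - intros x _.
    apply derivable_pt_lim_eq with (2 * cosh x - (1 * cosh x + x * sinh x)); [ring|].
    apply derivable_pt_lim_minus.
    + apply derivable_pt_lim_ext with (mult_real_fct 2 sinh); [reflexivity|].
      apply derivable_pt_lim_scal, derivable_pt_lim_sinh.
    + apply (derivable_pt_lim_mult id cosh);
        [apply derivable_pt_lim_id|apply derivable_pt_lim_cosh].
  - intros x _.
    apply derivable_pt_lim_eq with (sinh x - (1 * sinh x + x * cosh x)); [ring|].
    apply derivable_pt_lim_minus; [apply derivable_pt_lim_cosh|].
    apply (derivable_pt_lim_mult id sinh);
      [apply derivable_pt_lim_id|apply derivable_pt_lim_sinh].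
  - intros x Hx; assert (H := cosh_pos x); nra.
  - rewrite sinh_0; lra.
  - assert (H := mul_cosh_lt_two_sinh_PI2); lra.
Qed.

Lemma sinh_div_sqr_antitone y1 y2 :
  0 < y1 -> y1 < y2 -> y2 <= PI / 2 -> sinh y2 / (y2 * y2) <= sinh y1 / (y1 * y1).
Proof.
  intros H1 H12 H2.
  destruct (MVT_cor2 (fun y => sinh y / (y * y))
              (fun y => (y * cosh y - 2 * sinh y) / (y * y * y)) y1 y2 H12) as [r [Er Hr]].
  - intros x Hx.
    apply derivable_pt_lim_ext with (div_fct sinh (mult_fct id id)); [reflexivity|].
    eapply derivable_pt_lim_eq;
      [|apply derivable_pt_lim_div;
        [apply derivable_pt_lim_sinh
        |apply (derivable_pt_lim_mult id id); apply derivable_pt_lim_id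
        |unfold mult_fct, id; nra]].
    unfold mult_fct, id, Rsqr; field; lra.
  - assert (Hr3 : 0 < r * r * r) by (apply Rmult_lt_0_compat; nra).
    assert (Hm := mul_cosh_le_two_sinh r ltac:(lra)).
    assert ((r * cosh r - 2 * sinh r) / (r * r * r) <= 0).
    { unfold Rdiv; assert (0 < / (r * r * r)) by now apply Rinv_0_lt_compat. nra. }
    nra.
Qed.

Lemma alpha_le_1 I : 0 <= I <= 1 -> alpha I <= 1.
Proof.
  intros HI; destruct (Req_dec I 0) as [->|H0]; [rewrite alpha_0; lra|].
  assert (HP := PI_RGT_0).
  assert (HI0 : 0 < I) by lra.
  set (y := PI / 2 * I).
  assert (Hy : 0 < y <= PI / 2) by (unfold y; nra).
  assert (Hsy := sinh_pos y ltac:(lra)).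
  assert (Hmono : sinh (PI / 2) / (PI / 2 * (PI / 2)) <= sinh y / (y * y)).
  { destruct (Req_dec y (PI / 2)) as [->|Hne]; [lra|].
    apply sinh_div_sqr_antitone; lra. }
  rewrite <- sinh_ratio2_eq_alpha by exact HI0.
  replace (I * PI / 2) with y by (unfold y; field).
  apply Rmult_le_compat_r with (r := y * y) in Hmono; [|nra].
  replace (sinh (PI / 2) / (PI / 2 * (PI / 2)) * (y * y)) with (I ^ 2 * sinh (PI / 2))
    in Hmono by (unfold y; field; lra).
  replace (sinh y / (y * y) * (y * y)) with (sinh y) in Hmono by (field; lra).
  apply Rmult_le_reg_r with (sinh y); [exact Hsy|].
  unfold Rdiv; rewrite Rmult_assoc, Rinv_l, Rmult_1_l, Rmult_1_r by lra; exact Hmono.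
Qed.

Lemma alpha_le_beta I : 1 <= I -> alpha I <= beta I.
Proof. intros; unfold beta; assert (0 <= alpha I) by (apply alpha_nonneg; lra); nra. Qed.

Lemma beta_le_alpha I : 0 <= I <= 1 -> beta I <= alpha I.
Proof. intros; unfold beta; assert (0 <= alpha I) by (apply alpha_nonneg; lra); nra. Qed.

Lemma sinh_ge_quartic y : 0 <= y -> y ^ 4 / 48 <= sinh y.
Proof.
  intros Hy; unfold sinh; assert (H := exp_ge_taylor4 y Hy).
  assert (exp (- y) <= 1) by (rewrite <- exp_0; destruct Hy as [Hy|<-];
    [left; apply exp_increasing; lra|rewrite Ropp_0; lra]).
  assert (0 <= y ^ 2 /\ 0 <= y ^ 3) as [] by (split; apply pow_le; lra).
  lra.
Qed.

(* [beta] decays like [I^3 exp(- PI I / 2)]; the quartic lower bound on [sinh] suffices. *)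
Lemma beta_eventually_lt eps M : 0 < eps -> exists J, M < J /\ beta J < eps.
Proof.
  intros He; set (c := PI / 2).
  assert (Hc : 3 / 2 < c) by (unfold c; assert (H := PI2_3_2); lra).
  assert (Hs := sinh_pos c ltac:(lra)).
  set (K := 48 * sinh c / (c ^ 4 * eps)).
  assert (HK : 0 < K)
    by (unfold K; apply Rdiv_lt_0_compat; [lra|]; apply Rmult_lt_0_compat; [apply pow_lt|]; lra).
  set (J := Rabs M + K + 1).
  assert (HJM : M < J) by (unfold J; assert (H := Rle_abs M); lra).
  assert (HJ : 0 < J) by (unfold J; assert (H := Rabs_pos M); lra).
  exists J; split; [exact HJM|].
  rewrite <- sinh_ratio3_eq_beta by exact HJ; fold c.
  replace (J * PI / 2) with (c * J) by (unfold c; field).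
  assert (Hl := sinh_ge_quartic (c * J) ltac:(nra)).
  assert (Hc4 : 0 < (c * J) ^ 4) by (apply pow_lt; nra).
  apply Rle_lt_trans with (J ^ 3 * sinh c / ((c * J) ^ 4 / 48)).
  - unfold Rdiv; apply Rmult_le_compat_l; [assert (0 < J ^ 3) by (apply pow_lt; lra); nra|].
    apply Rinv_le_contravar; lra.
  - replace (J ^ 3 * sinh c / ((c * J) ^ 4 / 48)) with (K * eps / J)
      by (unfold K; field; repeat split; lra).
    apply Rmult_lt_reg_r with J; [exact HJ|].
    replace (K * eps / J * J) with (K * eps) by (field; lra).
    assert (K < J) by (unfold J; assert (H := Rabs_pos M); lra); nra.
Qed.

(** * The domain B *)

Lemma beta_root_beyond v J :
  0 < v -> 0 <= J -> v <= beta J -> exists y, J <= y /\ beta y = v.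
Proof.
  intros Hv HJ HbJ.
  destruct (beta_eventually_lt v J Hv) as [J' [HJJ' HbJ']].
  destruct (IVT_between beta J J' v continuity_beta ltac:(lra) ltac:(lra)) as [y [Hy Ey]].
  exists y; split; [lra|exact Ey].
Qed.

Lemma beta_root_below v J :
  0 < v -> 0 <= J -> v <= beta J -> exists y, 0 < y <= J /\ beta y = v.
Proof.
  intros Hv HJ HbJ.
  destruct (IVT_between beta 0 J v continuity_beta HJ) as [y [Hy Ey]];
    [rewrite beta_0; lra|].
  exists y; split; [|exact Ey].
  destruct (Req_dec y 0) as [->|]; [rewrite beta_0 in Ey|]; lra.
Qed.

Lemma alpha_root_below v J :
  0 < v -> 0 <= J -> v <= alpha J -> exists y, 0 < y <= J /\ alpha y = v.
Proof.
  intros Hv HJ HaJ.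
  destruct (IVT_between alpha 0 J v continuity_alpha HJ) as [y [Hy Ey]];
    [rewrite alpha_0; lra|].
  exists y; split; [|exact Ey].
  destruct (Req_dec y 0) as [->|]; [rewrite alpha_0 in Ey|]; lra.
Qed.

Section BetaMax.
Variables (m bmax : R).
Hypothesis Hm : 0 < m.
Hypothesis Hbmax : is_max_of (fun b => exists I, 0 <= I /\ b = beta I) bmax.

Lemma beta_le_bmax J : 0 <= J -> beta J <= bmax.
Proof. intros HJ; apply (proj2 Hbmax); now exists J. Qed.

Lemma bmax_ge_1 : 1 <= bmax.
Proof. rewrite <- beta_1; apply beta_le_bmax; lra. Qed.

Lemma crest_bounds_of_small_mu J :
  0 <= J -> m < 1 / bmax -> m * alpha J < 1 /\ m * beta J < 1.
Proof.
  intros HJ Hsmall; assert (Hb1 := bmax_ge_1).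
  assert (Hmb : m * bmax < 1).
  { apply Rmult_lt_compat_r with (r := bmax) in Hsmall; [|lra].
    replace (1 / bmax * bmax) with 1 in Hsmall by (field; lra); exact Hsmall. }
  assert (HbJ := beta_le_bmax J HJ); assert (HaJ := alpha_nonneg J HJ).
  split; [|nra].
  destruct (Rle_or_lt 1 J) as [HJ1|HJ1].
  - assert (H := alpha_le_beta J HJ1); nra.
  - assert (H := alpha_le_1 J ltac:(lra)); nra.
Qed.

Lemma beta_root_ge_1 : 1 / bmax <= m -> exists y, 1 <= y /\ beta y = 1 / m.
Proof.
  intros Hlarge; assert (Hv : 0 < 1 / m) by (apply Rdiv_lt_0_compat; lra).
  destruct (Rle_or_lt (1 / m) 1) as [Hv1|Hv1].
  - apply beta_root_beyond; [exact Hv|lra|now rewrite beta_1].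
  - destruct Hbmax as [[Is [HIs Es]] _].
    assert (Hbm : 1 / m <= bmax).
    { apply Rmult_le_compat_r with (r := bmax / m) in Hlarge;
        [|apply Rdiv_le_0_compat; assert (H := bmax_ge_1); lra].
      replace (1 / bmax * (bmax / m)) with (1 / m) in Hlarge by (assert (H := bmax_ge_1); field; lra).
      replace (m * (bmax / m)) with bmax in Hlarge by (field; lra); exact Hlarge. }
    assert (HIs1 : 1 <= Is).
    { destruct (Rle_or_lt 1 Is) as [|HIs1]; [assumption|].
      assert (H1 := alpha_le_1 Is ltac:(lra)); assert (H2 := alpha_nonneg Is HIs).
      unfold beta in Es; nra. }
    destruct (IVT_between beta 1 Is (1 / m) continuity_beta HIs1) as [y [Hy Ey]];
      [rewrite beta_1, <- Es; lra|].
    exists y; split; [lra|exact Ey].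
Qed.

Section LargeMu.
Variables (Ip Ipp : R).
Hypothesis Hlarge : 1 / bmax <= m.
Hypothesis HIpp : is_max_of (fun I => 0 < I /\ beta I = 1 / m) Ipp.
Hypothesis HIp_beta : m <= 1 -> is_min_of (fun I => 0 < I /\ beta I = 1 / m) Ip.
Hypothesis HIp_alpha : 1 <= m -> is_min_of (fun I => 0 < I /\ alpha I = 1 / m) Ip.

Lemma inv_mu_pos : 0 < 1 / m.
Proof. apply Rdiv_lt_0_compat; lra. Qed.

Lemma Ipp_ge_1 : 1 <= Ipp.
Proof.
  destruct beta_root_ge_1 as [y [Hy Ey]]; [exact Hlarge|].
  apply Rle_trans with y; [exact Hy|apply (proj2 HIpp); split; [lra|exact Ey]].
Qed.

Lemma crest_bounds_beyond_Ipp J : Ipp < J -> m * alpha J < 1 /\ m * beta J < 1.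
Proof.
  intros HJ; assert (H1 := Ipp_ge_1).
  assert (HbJ : beta J < 1 / m).
  { destruct (Rlt_or_le (beta J) (1 / m)) as [|Hge]; [assumption|exfalso].
    destruct (beta_root_beyond (1 / m) J inv_mu_pos ltac:(lra) Hge) as [y [Hy Ey]].
    assert (y <= Ipp) by (apply (proj2 HIpp); split; [lra|exact Ey]); lra. }
  assert (H := alpha_le_beta J ltac:(lra)); assert (H0 := alpha_nonneg J ltac:(lra)).
  split; apply mul_lt_1_of_lt_inv; lra.
Qed.

Lemma crest_bounds_below_Ip J : 0 <= J -> J < Ip -> m * alpha J < 1 /\ m * beta J < 1.
Proof.
  intros HJ0 HJ; assert (HaJ := alpha_nonneg J HJ0).
  destruct (Rle_or_lt 1 m) as [Hm1|Hm1].
  - destruct (HIp_alpha Hm1) as [_ Hmin].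
    assert (Ha : alpha J < 1 / m).
    { destruct (Rlt_or_le (alpha J) (1 / m)) as [|Hge]; [assumption|exfalso].
      destruct (alpha_root_below (1 / m) J inv_mu_pos HJ0 Hge) as [y [Hy Ey]].
      assert (Ip <= y) by (apply Hmin; split; [lra|exact Ey]); lra. }
    assert (HIp1 : Ip <= 1).
    { destruct (alpha_root_below (1 / m) 1 inv_mu_pos ltac:(lra))
        as [y [Hy Ey]]; [rewrite alpha_1; now apply inv_le_1|].
      assert (Ip <= y) by (apply Hmin; split; [lra|exact Ey]); lra. }
    assert (H := beta_le_alpha J ltac:(lra)).
    split; apply mul_lt_1_of_lt_inv; lra.
  - destruct (HIp_beta ltac:(lra)) as [_ Hmin].
    assert (Hb : beta J < 1 / m).
    { destruct (Rlt_or_le (beta J) (1 / m)) as [|Hge]; [assumption|exfalso].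
      destruct (beta_root_below (1 / m) J inv_mu_pos HJ0 Hge) as [y [Hy Ey]].
      assert (Ip <= y) by (apply Hmin; split; [lra|exact Ey]); lra. }
    split; [|now apply mul_lt_1_of_lt_inv].
    destruct (Rle_or_lt 1 J) as [HJ1|HJ1].
    + assert (H := alpha_le_beta J HJ1); apply mul_lt_1_of_lt_inv; lra.
    + assert (H := alpha_le_1 J ltac:(lra)); nra.
Qed.

End LargeMu.
End BetaMax.

(* The maximum crest [C_M(I)] is a graph over [phi] and no line [phi - I s = theta] is tangent
   to it. *)
Definition crest_transversal (mu I : R) : Prop :=
  Rabs (mu * alpha I) < 1 /\ Rabs (mu * beta I) < 1.

Lemma sinh_ratio3_root_iff v y :
  0 < y /\ y ^ 3 * sinh (PI / 2) / sinh (y * PI / 2) = v <-> 0 < y /\ beta y = v.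
Proof. split; intros [Hy E]; rewrite sinh_ratio3_eq_beta in *; tauto. Qed.

Lemma sinh_ratio2_root_iff v y :
  0 < y /\ y ^ 2 * sinh (PI / 2) / sinh (y * PI / 2) = v <-> 0 < y /\ alpha y = v.
Proof. split; intros [Hy E]; rewrite sinh_ratio2_eq_alpha in *; tauto. Qed.

Lemma crest_transversal_on_Bdom mu bmax Ip Ipp I :
  mu <> 0 ->
  is_max_of (fun b => exists I, 0 <= I /\ b = beta I) bmax ->
  (1 / bmax <= Rabs mu ->
     is_max_of (fun I => 0 < I /\ I ^ 3 * sinh (PI / 2) / sinh (I * PI / 2) = 1 / Rabs mu) Ipp /\
     (Rabs mu <= 1 ->
        is_min_of (fun I => 0 < I /\ I ^ 3 * sinh (PI / 2) / sinh (I * PI / 2) = 1 / Rabs mu) Ip) /\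
     (1 <= Rabs mu ->
        is_min_of (fun I => 0 < I /\ I ^ 2 * sinh (PI / 2) / sinh (I * PI / 2) = 1 / Rabs mu) Ip)) ->
  Bdom mu bmax Ip Ipp I -> crest_transversal mu I.
Proof.
  intros Hmu Hbmax Hroots HB.
  assert (Hm : 0 < Rabs mu) by now apply Rabs_pos_lt.
  assert (HJ := Rabs_pos I).
  cut (Rabs mu * alpha (Rabs I) < 1 /\ Rabs mu * beta (Rabs I) < 1).
  { unfold crest_transversal; now rewrite !Rabs_mult, Rabs_alpha, Rabs_beta. }
  unfold Bdom in HB; destruct (Rlt_dec (Rabs mu) (1 / bmax)) as [Hsmall|Hlarge].
  - now apply crest_bounds_of_small_mu with bmax.
  - apply Rnot_lt_le in Hlarge.
    destruct (Hroots Hlarge) as [HIpp [HIp3 HIp2]].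
    assert (HB' : Rabs I < Ip \/ Ipp < Rabs I)
      by (unfold Rabs; destruct (Rcase_abs I); lra).
    destruct HB' as [Hbelow|Hbeyond].
    + apply (crest_bounds_below_Ip _ Hm Ip); auto.
      * intros Hm1; exact (is_min_of_iff _ _ _ (sinh_ratio3_root_iff _) (HIp3 Hm1)).
      * intros Hm1; exact (is_min_of_iff _ _ _ (sinh_ratio2_root_iff _) (HIp2 Hm1)).
    + apply (crest_bounds_beyond_Ipp _ bmax Hm Hbmax Ipp Hlarge); auto.
      exact (is_max_of_iff _ _ _ (sinh_ratio3_root_iff _) HIpp).
Qed.

(** * The crest map *)

(* With [k = mu alpha(I)], the point of [C_M(I)] on the line through [theta] has phase
   [phi = theta - I tau*], and [theta = crest_map I k phi]. *)
Definition crest_map (I k p : R) : R := p + I * asin (k * sin p).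

Definition crest_cos (k p : R) : R := sqrt (1 - (k * sin p) * (k * sin p)).

Definition crest_map_slope (I k p : R) : R := 1 + I * (k * cos p / crest_cos k p).

Section CrestMap.
Variables I k : R.
Hypothesis Hk : Rabs k < 1.
Hypothesis HIk : Rabs (I * k) < 1.

Lemma mul_sin_bound p : -1 < k * sin p < 1.
Proof.
  assert (H := SIN_bound p); apply Rabs_lt_between in Hk.
  assert (k * sin p * (k * sin p) < 1) by (assert (sin p * sin p <= 1) by nra; nra).
  split; nra.
Qed.

Lemma crest_cos_pos p : 0 < crest_cos k p.
Proof. unfold crest_cos; apply sqrt_lt_R0; assert (H := mul_sin_bound p); nra. Qed.

Lemma crest_cos_sqr p : crest_cos k p * crest_cos k p = 1 - (k * sin p) * (k * sin p).
Proof. unfold crest_cos; apply sqrt_sqrt; assert (H := mul_sin_bound p); nra. Qed.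

Lemma crest_map_derivable p : derivable_pt_lim (crest_map I k) p (crest_map_slope I k p).
Proof.
  unfold crest_map, crest_map_slope.
  apply derivable_pt_lim_plus; [apply derivable_pt_lim_id|].
  apply derivable_pt_lim_ext with (mult_real_fct I (comp asin (mult_real_fct k sin)));
    [reflexivity|].
  apply derivable_pt_lim_scal.
  apply derivable_pt_lim_eq with (/ crest_cos k p * (k * cos p)).
  { field; apply Rgt_not_eq, crest_cos_pos. }
  apply derivable_pt_lim_comp with (f2 := asin) (f1 := mult_real_fct k sin).
  - apply derivable_pt_lim_scal, derivable_pt_lim_sin.
  - apply derivable_pt_lim_asin, mul_sin_bound.
Qed.

(* [|I k cos p| < crest_cos k p] because [(I k)^2 cos^2 p + k^2 sin^2 p < 1]. *)
Lemma crest_map_slope_pos p : 0 < crest_map_slope I k p.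
Proof.
  unfold crest_map_slope.
  assert (Hq := crest_cos_pos p); assert (Hq2 := crest_cos_sqr p).
  apply Rabs_lt_between in Hk; apply Rabs_lt_between in HIk.
  assert (Hpyth := sin2_cos2 p); unfold Rsqr in Hpyth.
  assert (Hlt : (I * k * cos p) * (I * k * cos p) < crest_cos k p * crest_cos k p).
  { rewrite Hq2.
    replace (I * k * cos p * (I * k * cos p)) with ((I * k) * (I * k) * (cos p * cos p)) by ring.
    replace (k * sin p * (k * sin p)) with ((k * k) * (sin p * sin p)) by ring.
    assert (0 <= cos p * cos p) by nra; assert (0 <= sin p * sin p) by nra.
    assert ((I * k) * (I * k) < 1) by nra; assert (k * k < 1) by nra.
    destruct (Rle_or_lt (1 / 2) (cos p * cos p)).
    - assert ((1 - (I * k) * (I * k)) * (cos p * cos p) > 0) by (apply Rmult_lt_0_compat; lra).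
      assert ((1 - k * k) * (sin p * sin p) >= 0) by (apply Rle_ge, Rmult_le_pos; lra); nra.
    - assert ((1 - k * k) * (sin p * sin p) > 0) by (apply Rmult_lt_0_compat; lra).
      assert ((1 - (I * k) * (I * k)) * (cos p * cos p) >= 0)
        by (apply Rle_ge, Rmult_le_pos; lra); nra. }
  replace (1 + I * (k * cos p / crest_cos k p)) with ((crest_cos k p + I * k * cos p) / crest_cos k p)
    by (field; lra).
  apply Rdiv_lt_0_compat; nra.
Qed.

Definition crest_map_derivable_fun : derivable (crest_map I k) :=
  fun p => exist _ (crest_map_slope I k p) (crest_map_derivable p).

Lemma crest_map_increasing : strict_increasing (crest_map I k).
Proof. apply (positive_derivative _ crest_map_derivable_fun); intros p; apply crest_map_slope_pos. Qed.

Lemma crest_map_inj p1 p2 : crest_map I k p1 = crest_map I k p2 -> p1 = p2.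
Proof.
  intros E; destruct (Rtotal_order p1 p2) as [H|[H|H]]; [|exact H|];
    apply crest_map_increasing in H; lra.
Qed.

Lemma crest_map_lt_iff p1 p2 : crest_map I k p1 < crest_map I k p2 <-> p1 < p2.
Proof.
  split; [|apply crest_map_increasing].
  intros H; destruct (Rtotal_order p1 p2) as [|[<-|Hlt]]; [assumption|lra|].
  apply crest_map_increasing in Hlt; lra.
Qed.

Lemma continuity_crest_map : continuity (crest_map I k).
Proof.
  intros p; apply derivable_continuous_pt; exists (crest_map_slope I k p).
  apply crest_map_derivable.
Qed.

Lemma crest_map_surj th : exists p, crest_map I k p = th.
Proof.
  set (M := Rabs I * 2 + 1); assert (HM : 0 < M) by (unfold M; assert (H := Rabs_pos I); lra).
  assert (Hnear : forall p, Rabs (crest_map I k p - p) <= Rabs I * 2).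
  { intros p; unfold crest_map.
    replace (p + I * asin (k * sin p) - p) with (I * asin (k * sin p)) by ring.
    rewrite Rabs_mult; apply Rmult_le_compat_l; [apply Rabs_pos|].
    assert (H := asin_bound (k * sin p)); assert (H2 := PI_le_33_10); apply Rabs_le; lra. }
  destruct (IVT_between (crest_map I k) (th - M) (th + M) th continuity_crest_map ltac:(lra))
    as [p [_ Ep]]; [|now exists p].
  assert (H1 := Hnear (th - M)); assert (H2 := Hnear (th + M)).
  apply Rabs_le_between in H1; apply Rabs_le_between in H2; unfold M in *; lra.
Qed.

End CrestMap.

Lemma crest_map_0 I k : crest_map I k 0 = 0.
Proof. unfold crest_map; rewrite sin_0, Rmult_0_r, asin_0; ring. Qed.

Lemma crest_map_PI I k : crest_map I k PI = PI.
Proof. unfold crest_map; rewrite sin_PI, Rmult_0_r, asin_0; ring. Qed.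

Lemma crest_map_reflect I k p : crest_map I k (2 * PI - p) = 2 * PI - crest_map I k p.
Proof.
  unfold crest_map; replace (2 * PI - p) with (- p + 2 * INR 1 * PI) by (simpl; ring).
  rewrite sin_period, sin_neg; replace (k * - sin p) with (- (k * sin p)) by ring.
  rewrite asin_opp; simpl; ring.
Qed.

Lemma crest_map_2PI I k : crest_map I k (2 * PI) = 2 * PI.
Proof. replace (2 * PI) with (2 * PI - 0) by ring; rewrite crest_map_reflect, crest_map_0; ring. Qed.

(** * The level set of the reduced Poincare function *)

Definition level_disc (r I : R) : R := 1 - (r * I) * (r * I) + (r * I * I) * (r * I * I).

Definition level_cos (r I : R) : R := r * I * I / (1 + sqrt (level_disc r I)).

Section LevelRoot.
Variables r I : R.
Hypothesis Hk : (r * I) * (r * I) < 1.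
Hypothesis Hx : (r * I * I) * (r * I * I) < 1.

Let S := sqrt (level_disc r I).

Lemma level_equation_iff_quadratic c :
  -1 <= c <= 1 ->
  (r * c + sqrt (1 - (r * I) * (r * I) * (1 - c * c)) = 1 <->
   r * c <= 1 /\ r * ((I * I - 1) * r * c * c + 2 * c - r * I * I) = 0).
Proof.
  intros Hc.
  assert (HQ : 0 <= 1 - (r * I) * (r * I) * (1 - c * c)).
  { assert (0 <= 1 - c * c <= 1) by nra; assert (0 <= (r * I) * (r * I)) by nra. nra. }
  split.
  - intros E; assert (Hq := sqrt_pos (1 - (r * I) * (r * I) * (1 - c * c))).
    assert (Hq2 := sqrt_sqrt _ HQ).
    replace (sqrt (1 - (r * I) * (r * I) * (1 - c * c))) with (1 - r * c) in * by lra.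
    split; [lra|nra].
  - intros [Hrc Hquad].
    replace (sqrt (1 - (r * I) * (r * I) * (1 - c * c))) with (1 - r * c); [ring|].
    symmetry; apply sqrt_lem_1; [exact HQ|lra|nra].
Qed.

Lemma level_disc_pos : 0 < level_disc r I.
Proof. unfold level_disc; assert (0 <= (r * I * I) * (r * I * I)) by nra; lra. Qed.

Lemma level_sqrt_pos : 0 < S.
Proof. apply sqrt_lt_R0, level_disc_pos. Qed.

Lemma level_sqrt_sqr : S * S = 1 - (r * I) * (r * I) + (r * I * I) * (r * I * I).
Proof. apply sqrt_sqrt; left; apply level_disc_pos. Qed.

Lemma level_cos_eq : 1 + r * (I * I - 1) * level_cos r I = S.
Proof.
  assert (HS := level_sqrt_pos); assert (HS2 := level_sqrt_sqr).
  unfold level_cos; fold S.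
  apply Rmult_eq_reg_r with (1 + S); [|lra].
  replace ((1 + r * (I * I - 1) * (r * I * I / (1 + S))) * (1 + S))
    with (1 + S + (r * I * I) * (r * I * I) - (r * I) * (r * I)) by (field; lra).
  nra.
Qed.

Lemma level_cos_bound : -1 < level_cos r I < 1.
Proof.
  assert (HS := level_sqrt_pos).
  assert (Hc : level_cos r I * (1 + S) = r * I * I) by (unfold level_cos; fold S; field; lra).
  assert (-1 < r * I * I < 1) by nra.
  split; nra.
Qed.

(* The quadratic has roots [c] with [1 + r (I^2 - 1) c = S] or [= - S]; the second one
   violates [r c <= 1]. *)
Lemma quadratic_root_iff c :
  -1 <= c <= 1 ->
  (r * c <= 1 /\ (I * I - 1) * r * c * c + 2 * c - r * I * I = 0 <-> c = level_cos r I).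
Proof.
  intros Hc; assert (HS := level_sqrt_pos); assert (HS2 := level_sqrt_sqr).
  unfold level_cos; fold S.
  split.
  - intros [Hrc Hquad].
    assert (Hw2 : (1 + r * (I * I - 1) * c) * (1 + r * (I * I - 1) * c) = S * S).
    { transitivity (S * S + r * (I * I - 1) * ((I * I - 1) * r * c * c + 2 * c - r * I * I));
        [rewrite HS2; ring|rewrite Hquad; ring]. }
    assert (Hw : 1 + r * (I * I - 1) * c = S \/ 1 + r * (I * I - 1) * c = - S) by nra.
    destruct Hw as [Hw|Hw].
    + apply Rmult_eq_reg_r with (1 + S); [|lra].
      unfold Rdiv; rewrite Rmult_assoc, Rinv_l, Rmult_1_r by lra; nra.
    + exfalso; destruct (Rlt_or_le (I * I) 1) as [HI|HI].
      * assert (Hpos : 0 < r * c) by nra.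
        assert (r * c * (1 - I * I) <= r * c) by nra; nra.
      * assert (Hrc_abs : Rabs (r * c) <= Rabs r).
        { rewrite Rabs_mult; assert (Rabs c <= 1) by (apply Rabs_le; lra).
          assert (0 <= Rabs r) by apply Rabs_pos; nra. }
        assert (Hrx : Rabs r * (I * I) < 1).
        { rewrite <- (Rabs_right (I * I)) by nra; rewrite <- Rabs_mult.
          apply Rabs_def1; nra. }
        assert (Habs : Rabs (r * c) * (I * I - 1) = 1 + S).
        { rewrite <- (Rabs_right (I * I - 1)) by lra; rewrite <- Rabs_mult.
          replace (r * c * (I * I - 1)) with (- (1 + S)) by lra.
          rewrite Rabs_Ropp; apply Rabs_right; lra. }
        assert (0 <= Rabs (r * c)) by apply Rabs_pos; nra.
  - intros Ec.
    assert (Hc1 : c * (1 + S) = r * I * I) by (rewrite Ec; field; lra).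
    assert (Hw : 1 + r * (I * I - 1) * c = S) by (rewrite Ec; exact level_cos_eq).
    split; [|nra].
    assert (Hrc : r * c * (1 + S) = (r * I) * (r * I)) by (rewrite Rmult_assoc, Hc1; ring).
    assert (0 <= (r * I) * (r * I)) by nra; nra.
Qed.

Lemma level_equation_iff c :
  r <> 0 -> -1 <= c <= 1 ->
  (r * c + sqrt (1 - (r * I) * (r * I) * (1 - c * c)) = 1 <-> c = level_cos r I).
Proof.
  intros Hr Hc; rewrite level_equation_iff_quadratic, <- quadratic_root_iff by exact Hc.
  split; intros [Hrc Hquad]; split; auto.
  - now destruct (Rmult_integral _ _ Hquad).
  - now rewrite Hquad, Rmult_0_r.
Qed.

End LevelRoot.

Definition level_phase (mu I : R) : R := PI / 2 - asin (level_cos (mu * alpha_quot I) I).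

Definition highway_l (mu I : R) : R := crest_map I (mu * alpha I) (level_phase mu I).

Definition highway_r (mu I : R) : R := 2 * PI - highway_l mu I.

Lemma crest_transversal_sqr mu I :
  crest_transversal mu I ->
  (mu * alpha_quot I * I) * (mu * alpha_quot I * I) < 1 /\
  (mu * alpha_quot I * I * I) * (mu * alpha_quot I * I * I) < 1.
Proof.
  intros [Hk Hx]; unfold beta in Hx; rewrite alpha_eq_mul_quot in Hk, Hx.
  apply Rabs_lt_between in Hk; apply Rabs_lt_between in Hx; split; nra.
Qed.

Lemma level_cos_transversal_bound mu I :
  crest_transversal mu I -> -1 < level_cos (mu * alpha_quot I) I < 1.
Proof. intros Hcrest; destruct (crest_transversal_sqr mu I Hcrest); now apply level_cos_bound. Qed.

Lemma level_phase_bound mu I : crest_transversal mu I -> 0 < level_phase mu I < PI.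
Proof.
  intros Hcrest; unfold level_phase.
  assert (H := asin_bound_lt _ (level_cos_transversal_bound mu I Hcrest)); lra.
Qed.

Lemma cos_level_phase mu I :
  crest_transversal mu I -> cos (level_phase mu I) = level_cos (mu * alpha_quot I) I.
Proof.
  intros Hcrest; unfold level_phase; rewrite cos_shift; apply sin_asin.
  assert (H := level_cos_transversal_bound mu I Hcrest); lra.
Qed.

Section ReducedPoincare.
Variables a00 a10 a01 I : R.
Hypothesis Ha : a10 * a01 <> 0.
Let mu := a10 / a01.
Hypothesis Hcrest : crest_transversal mu I.
Let k := mu * alpha I.
Let r := mu * alpha_quot I.

Lemma a01_neq0 : a01 <> 0.
Proof. exact (proj2 (Rmult_neq_0_reg _ _ Ha)). Qed.

Lemma mu_neq0 : mu <> 0.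
Proof. apply div_neq_0; [exact (proj1 (Rmult_neq_0_reg _ _ Ha))|exact a01_neq0]. Qed.

Lemma r_neq0 : r <> 0.
Proof. apply Rmult_integral_contrapositive_currified; [apply mu_neq0|apply Rgt_not_eq, alpha_quot_pos]. Qed.

Lemma A01_neq0 : A01 a01 <> 0.
Proof.
  unfold A01; assert (H := sinh_PI2_pos); assert (H2 := PI_RGT_0).
  apply div_neq_0; [apply Rmult_integral_contrapositive_currified, a01_neq0|]; lra.
Qed.

Lemma A10_eq : A10 a10 I = r * A01 a01.
Proof. apply A10_eq_mul_quot, a01_neq0. Qed.

Lemma k_eq : k = r * I.
Proof. unfold k, r; rewrite alpha_eq_mul_quot; ring. Qed.

Lemma Rabs_k_lt_1 : Rabs k < 1.
Proof. exact (proj1 Hcrest). Qed.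

Lemma Rabs_Ik_lt_1 : Rabs (I * k) < 1.
Proof. replace (I * k) with (mu * beta I) by (unfold k, beta; ring); exact (proj2 Hcrest). Qed.

Let phase (th : R) : R := th - I * tau_star mu I th.

Lemma tau_star_eq th : tau_star mu I th = asin (k * sin (phase th)).
Proof.
  enough (H : - tau_star mu I th = xiM mu I (phase th)) by (unfold xiM in H; fold k in H; lra).
  unfold phase, tau_star; apply epsilon_spec.
  destruct (crest_map_surj I k Rabs_k_lt_1 th) as [p Ep].
  exists (asin (k * sin p)); unfold xiM; fold k.
  replace (th - I * asin (k * sin p)) with p by (rewrite <- Ep; unfold crest_map; ring).
  reflexivity.
Qed.

Lemma crest_map_phase th : crest_map I k (phase th) = th.
Proof. unfold crest_map; rewrite <- tau_star_eq; unfold phase; ring. Qed.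

Lemma phase_crest_map p : phase (crest_map I k p) = p.
Proof. apply (crest_map_inj I k Rabs_k_lt_1 Rabs_Ik_lt_1), crest_map_phase. Qed.

Lemma phase_lt_iff th1 th2 : phase th1 < phase th2 <-> th1 < th2.
Proof. rewrite <- (crest_map_lt_iff I k Rabs_k_lt_1 Rabs_Ik_lt_1), !crest_map_phase; reflexivity. Qed.

Lemma phase_le th1 th2 : th1 <= th2 -> phase th1 <= phase th2.
Proof. intros [H|E]; [left; now apply phase_lt_iff|rewrite E; lra]. Qed.

Lemma phase_range th : 0 <= th < 2 * PI -> 0 <= phase th < 2 * PI.
Proof.
  intros Hth; rewrite <- (crest_map_0 I k), <- (crest_map_2PI I k) in Hth.
  rewrite <- (phase_crest_map 0), <- (phase_crest_map (2 * PI)).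
  split; [apply phase_le|apply phase_lt_iff]; lra.
Qed.

Lemma continuity_pt_phase th : continuity_pt phase th.
Proof.
  apply (continuity_pt_recip_interv (crest_map I k) phase (phase th - 1) (phase th + 1));
    [lra| | | | |].
  - intros x y _ Hxy _; now apply (crest_map_increasing I k Rabs_k_lt_1 Rabs_Ik_lt_1).
  - intros x _ _; apply crest_map_phase.
  - intros x H1 H2; apply phase_le in H1; apply phase_le in H2.
    rewrite !phase_crest_map in H1, H2; lra.
  - intros; apply continuity_crest_map, Rabs_k_lt_1.
  - rewrite <- (crest_map_phase th) at 2 3.
    split; apply (crest_map_increasing I k Rabs_k_lt_1 Rabs_Ik_lt_1); lra.
Qed.

Lemma phase_derivable th :
  derivable_pt_lim phase th (1 / crest_map_slope I k (phase th)).
Proof.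
  assert (Hincr : phase (th - 1) <= phase th <= phase (th + 1)) by (split; apply phase_le; lra).
  assert (D := derivable_pt_lim_recip_interv (crest_map I k) phase (th - 1) (th + 1) th
                 (fun a _ => crest_map_derivable_fun I k Rabs_k_lt_1 a) (continuity_pt_phase th)
                 ltac:(lra) ltac:(lra) Hincr (fun x _ => crest_map_phase x)).
  apply D, Rgt_not_eq, (crest_map_slope_pos I k Rabs_k_lt_1 Rabs_Ik_lt_1).
Qed.

Let poincare_on_crest (p : R) : R := A00 a00 + A10 a10 I * cos p + A01 a01 * crest_cos k p.

Let poincare_on_crest_slope (p : R) : R :=
  - sin p * (A10 a10 I + A01 a01 * k * k * cos p / crest_cos k p).

Lemma Lstar_eq th : Lstar a00 a10 a01 I th = poincare_on_crest (phase th).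
Proof.
  unfold Lstar; fold mu; fold (phase th); rewrite tau_star_eq.
  unfold poincare_on_crest, crest_cos; rewrite cos_asin; [reflexivity|].
  assert (H := mul_sin_bound k Rabs_k_lt_1 (phase th)); lra.
Qed.

Lemma poincare_on_crest_derivable p :
  derivable_pt_lim poincare_on_crest p (poincare_on_crest_slope p).
Proof.
  apply is_derive_Reals; unfold poincare_on_crest, poincare_on_crest_slope, crest_cos.
  assert (H := mul_sin_bound k Rabs_k_lt_1 p).
  assert (Hq : 0 < 1 - k * sin p * (k * sin p)) by nra.
  assert (Hs : 0 < sqrt (1 - k * sin p * (k * sin p))) by now apply sqrt_lt_R0.
  auto_derive; [exact Hq|].
  replace (1 + - (k * sin p * (k * sin p))) with (1 - k * sin p * (k * sin p)) by ring.
  field; lra.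
Qed.

Lemma Lstar_derivable th :
  derivable_pt_lim (fun t => Lstar a00 a10 a01 I t) th
    (poincare_on_crest_slope (phase th) * (1 / crest_map_slope I k (phase th))).
Proof.
  apply derivable_pt_lim_ext with (fun t => poincare_on_crest (phase t));
    [intros; symmetry; apply Lstar_eq|].
  apply (derivable_pt_lim_comp phase poincare_on_crest);
    [apply phase_derivable|apply poincare_on_crest_derivable].
Qed.

Lemma crest_cos_eq p : crest_cos k p = sqrt (1 - (r * I) * (r * I) * (1 - cos p * cos p)).
Proof.
  unfold crest_cos; rewrite <- k_eq; f_equal.
  assert (H := sin2_cos2 p); unfold Rsqr in H; nra.
Qed.

Lemma poincare_on_crest_level p :
  poincare_on_crest p = A00 a00 + A01 a01 <-> cos p = level_cos r I.
Proof.
  destruct (crest_transversal_sqr mu I Hcrest) as [Hk Hx]; fold r in Hk, Hx.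
  rewrite <- level_equation_iff by (auto using r_neq0, COS_bound).
  unfold poincare_on_crest; rewrite A10_eq, crest_cos_eq.
  assert (H := A01_neq0); split; intros E.
  - apply Rmult_eq_reg_l with (A01 a01); [lra|exact H].
  - transitivity (A00 a00 + A01 a01 * (r * cos p + sqrt (1 - r * I * (r * I) * (1 - cos p * cos p))));
      [ring|rewrite E; ring].
Qed.

Lemma cos_level_phase_eq : cos (level_phase mu I) = level_cos r I.
Proof. exact (cos_level_phase mu I Hcrest). Qed.

Lemma Lstar_level_iff th :
  0 <= th < 2 * PI ->
  (Lstar a00 a10 a01 I th = A00 a00 + A01 a01 <-> th = highway_l mu I \/ th = highway_r mu I).
Proof.
  intros Hth.
  rewrite Lstar_eq, poincare_on_crest_level, <- cos_level_phase_eq,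
    (cos_eq_iff_on_period _ _ (level_phase_bound mu I Hcrest) (phase_range th Hth)).
  unfold highway_r, highway_l; fold k; rewrite <- crest_map_reflect.
  split; intros [E|E]; [left|right|left|right];
    solve [rewrite <- E; symmetry; apply crest_map_phase | rewrite E; apply phase_crest_map].
Qed.

(* On the level set [crest_cos k p = 1 - r cos p], so the bracket of the slope is
   [A01 r (1 + r (I^2 - 1) cos p) / crest_cos k p = A01 r sqrt (level_disc r I) / crest_cos k p]. *)
Lemma poincare_on_crest_slope_neq0 p :
  cos p = level_cos r I -> sin p <> 0 -> poincare_on_crest_slope p <> 0.
Proof.
  intros Hc Hs.
  destruct (crest_transversal_sqr mu I Hcrest) as [Hk _]; fold r in Hk.
  assert (Hq := crest_cos_pos k Rabs_k_lt_1 p).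
  assert (HS := level_sqrt_pos r I Hk).
  assert (HA := A01_neq0); assert (Hr := r_neq0).
  assert (Hq_eq : crest_cos k p = 1 - r * cos p).
  { apply poincare_on_crest_level in Hc as Hlevel; unfold poincare_on_crest in Hlevel.
    rewrite A10_eq in Hlevel; apply Rmult_eq_reg_l with (A01 a01); [lra|exact HA]. }
  assert (Hw := level_cos_eq r I Hk); rewrite <- Hc in Hw.
  unfold poincare_on_crest_slope; rewrite A10_eq.
  replace (r * A01 a01 + A01 a01 * k * k * cos p / crest_cos k p)
    with (A01 a01 * r * (1 + r * (I * I - 1) * cos p) / crest_cos k p)
    by (rewrite Hq_eq in *; rewrite k_eq; field; lra).
  rewrite Hw.
  assert (Hfactor : A01 a01 * r * sqrt (level_disc r I) / crest_cos k p <> 0).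
  { unfold Rdiv; apply Rmult_integral_contrapositive; split; [|apply Rinv_neq_0_compat; lra].
    apply Rmult_integral_contrapositive; split; [apply Rmult_integral_contrapositive; split|];
      auto; lra. }
  apply Rmult_integral_contrapositive; split; [intro; apply Hs; lra|exact Hfactor].
Qed.

Lemma Lstar_slope_neq0 th :
  cos (phase th) = level_cos r I -> sin (phase th) <> 0 ->
  exists d, derivable_pt_lim (fun t => Lstar a00 a10 a01 I t) th d /\ d <> 0.
Proof.
  intros Hc Hs; eexists; split; [apply Lstar_derivable|].
  apply Rmult_integral_contrapositive; split; [now apply poincare_on_crest_slope_neq0|].
  assert (H := crest_map_slope_pos I k Rabs_k_lt_1 Rabs_Ik_lt_1 (phase th)).
  unfold Rdiv; rewrite Rmult_1_l; apply Rinv_neq_0_compat; lra.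
Qed.

Lemma Lstar_slope_highway_l :
  exists d, derivable_pt_lim (fun t => Lstar a00 a10 a01 I t) (highway_l mu I) d /\ d <> 0.
Proof.
  apply Lstar_slope_neq0; unfold highway_l; fold k; rewrite phase_crest_map;
    [apply cos_level_phase_eq|].
  apply Rgt_not_eq, sin_gt_0; apply level_phase_bound, Hcrest.
Qed.

Lemma Lstar_slope_highway_r :
  exists d, derivable_pt_lim (fun t => Lstar a00 a10 a01 I t) (highway_r mu I) d /\ d <> 0.
Proof.
  apply Lstar_slope_neq0; unfold highway_r, highway_l; fold k;
    rewrite <- crest_map_reflect, phase_crest_map; [rewrite cos_2PI_sub; apply cos_level_phase_eq|].
  rewrite sin_2PI_sub; apply Ropp_neq_0_compat, Rgt_not_eq, sin_gt_0;
    apply level_phase_bound, Hcrest.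
Qed.

Lemma highway_bounds : 0 < highway_l mu I < PI /\ PI < highway_r mu I < 2 * PI.
Proof.
  enough (0 < highway_l mu I < PI) by (unfold highway_r; lra).
  assert (H := level_phase_bound mu I Hcrest).
  unfold highway_l; fold k; rewrite <- (crest_map_0 I k), <- (crest_map_PI I k) at 1.
  split; apply (crest_map_increasing I k Rabs_k_lt_1 Rabs_Ik_lt_1); lra.
Qed.

End ReducedPoincare.

(** * Smoothness of the highways *)

Section HighwaySmoothness.
Variable mu : R.
Let U := crest_transversal mu.

Lemma smooth_on_level_cos : smooth_on U (fun I => level_cos (mu * alpha_quot I) I).
Proof.
  assert (Hr : smooth_on U (fun I => mu * alpha_quot I))
    by apply smooth_on_scal, smooth_on_alpha_quot.
  assert (HrI : smooth_on U (fun I => mu * alpha_quot I * I))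
    by auto using smooth_on_mult, smooth_on_id.
  assert (HrII : smooth_on U (fun I => mu * alpha_quot I * I * I))
    by auto using smooth_on_mult, smooth_on_id.
  unfold level_cos; apply smooth_on_mult; [exact HrII|].
  apply smooth_on_inv; [|intros I _; assert (H := sqrt_pos (level_disc (mu * alpha_quot I) I)); lra].
  apply smooth_on_plus; [apply smooth_on_const|].
  apply smooth_on_sqrt;
    [|intros I HI; destruct (crest_transversal_sqr mu I HI); now apply level_disc_pos].
  unfold level_disc; apply smooth_on_plus; [apply smooth_on_minus; [apply smooth_on_const|]|];
    apply smooth_on_mult; assumption.
Qed.

Lemma smooth_on_level_phase : smooth_on U (level_phase mu).
Proof.
  unfold level_phase; apply smooth_on_minus; [apply smooth_on_const|].
  apply smooth_on_asin; [apply smooth_on_level_cos|].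
  intros I HI; now apply level_cos_transversal_bound.
Qed.

Lemma smooth_on_highway_l : smooth_on U (highway_l mu).
Proof.
  assert (Halpha : smooth_on U (fun I => mu * alpha I)).
  { apply smooth_on_scal, smooth_on_ext with (fun I => I * alpha_quot I);
      [intros; symmetry; apply alpha_eq_mul_quot|].
    apply smooth_on_mult; [apply smooth_on_id|apply smooth_on_alpha_quot]. }
  unfold highway_l, crest_map; apply smooth_on_plus; [apply smooth_on_level_phase|].
  apply smooth_on_mult; [apply smooth_on_id|].
  apply smooth_on_asin; [|intros I HI; now apply mul_sin_bound, (proj1 HI)].
  apply smooth_on_mult; [exact Halpha|].
  apply (smooth_on_comp U (fun _ => True)); auto using smooth_on_sin, smooth_on_level_phase.
Qed.

Lemma smooth_on_highway_r : smooth_on U (highway_r mu).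
Proof. apply smooth_on_minus; [apply smooth_on_const|apply smooth_on_highway_l]. Qed.

End HighwaySmoothness.

Theorem mainTheorem5 :
  forall a00 a10 a01 : R,
    a10 * a01 <> 0 ->
    let mu := a10 / a01 in
    forall bmax : R,
      is_max_of (fun b => exists I, 0 <= I /\ b = beta I) bmax ->
    forall Ip Ipp : R,
      (1 / bmax <= Rabs mu ->
         is_max_of (fun I => 0 < I /\
                     I ^ 3 * sinh (PI / 2) / sinh (I * PI / 2) = 1 / Rabs mu) Ipp /\
         (Rabs mu <= 1 ->
            is_min_of (fun I => 0 < I /\
                        I ^ 3 * sinh (PI / 2) / sinh (I * PI / 2) = 1 / Rabs mu) Ip) /\
         (1 <= Rabs mu ->
            is_min_of (fun I => 0 < I /\
                        I ^ 2 * sinh (PI / 2) / sinh (I * PI / 2) = 1 / Rabs mu) Ip)) ->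
    let B := Bdom mu bmax Ip Ipp in
    exists thl thr : R -> R,
      smooth_on B thl /\ smooth_on B thr /\
      (forall I, B I -> 0 < thl I < PI /\ PI < thr I < 2 * PI) /\
      (forall I theta, B I -> 0 <= theta < 2 * PI ->
         (Lstar a00 a10 a01 I theta = A00 a00 + A01 a01 <->
          theta = thl I \/ theta = thr I)) /\
      (forall I, B I ->
         (exists d, derivable_pt_lim (fun th => Lstar a00 a10 a01 I th) (thl I) d /\ d <> 0) /\
         (exists d, derivable_pt_lim (fun th => Lstar a00 a10 a01 I th) (thr I) d /\ d <> 0)).
Proof.
  intros a00 a10 a01 Ha mu bmax Hbmax Ip Ipp Hroots B.
  assert (Hcrest : forall I, B I -> crest_transversal mu I).
  { intros I HI.
    exact (crest_transversal_on_Bdom mu bmax Ip Ipp I (mu_neq0 a10 a01 Ha) Hbmax Hroots HI). }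
  exists (highway_l mu), (highway_r mu).
  split; [exact (smooth_on_subset _ _ _ Hcrest (smooth_on_highway_l mu))|].
  split; [exact (smooth_on_subset _ _ _ Hcrest (smooth_on_highway_r mu))|].
  split; [intros I HI; exact (highway_bounds a10 a01 I (Hcrest I HI))|].
  split; [intros I th HI Hth; exact (Lstar_level_iff a00 a10 a01 I Ha (Hcrest I HI) th Hth)|].
  intros I HI; split.
  - exact (Lstar_slope_highway_l a00 a10 a01 I Ha (Hcrest I HI)).
  - exact (Lstar_slope_highway_r a00 a10 a01 I Ha (Hcrest I HI)).
Qed.
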